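(* Under the curve flow $\gamma_t=k_1\gamma''+k_2\gamma'-\big(k_2'+\tfrac13(k_1''+2k_1^2)\big)\gamma$, one has \[ (k_2)_t=D\Big(\tfrac23k_1^{(4)}+k_2'''-2k_1k_1''-(k_1')^2-2k_1k_2'+\tfrac49k_1^3+2k_2^2\Big), \] so $\int k_2\,\mathrm{d}x$ is conserved.
   Context: $\gamma(x,t)$ is a family of nondegenerate curves in centroaffine $\mathbb R^3$ parametrized by centroaffine arclength $x$ ($\det(\gamma,\gamma',\gamma'')=1$), with invariants $k_1,k_2$ defined by $\gamma'''=(k_1\gamma)'+k_2\gamma$; $D=\partial/\partial x$. *)

From Stdlib Require Import Reals List.
From Coquelicot Require Import Coquelicot.
Open Scope R_scope.

(* Functions of (x,t); x = centroaffine arclength, t = flow time. *)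
Definition pdx (f : R -> R -> R) : R -> R -> R :=
  fun x t => Derive (fun y => f y t) x.
Definition pdt (f : R -> R -> R) : R -> R -> R :=
  fun x t => Derive (fun s => f x s) t.

Definition applyD (l : list bool) (f : R -> R -> R) : R -> R -> R :=
  fold_right (fun (b : bool) g => if b then pdx g else pdt g) f l.

Definition smooth2 (f : R -> R -> R) : Prop :=
  forall (l : list bool) (x t : R),
    ex_derive (fun y => applyD l f y t) x /\
    ex_derive (fun s => applyD l f x s) t /\
    continuous (fun p : R * R => applyD l f (fst p) (snd p)) (x, t).

Definition det3 (a1 a2 a3 b1 b2 b3 c1 c2 c3 : R) : R :=
  a1 * (b2 * c3 - b3 * c2) - b1 * (a2 * c3 - a3 * c2) + c1 * (a2 * b3 - a3 * b2).

From Stdlib Require Import Reals List FunctionalExtensionality.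
From Coquelicot Require Import Coquelicot.
Open Scope R_scope.

(* Along the curve the frame (gamma, gamma', gamma'') has determinant 1, so every vector field is
   a combination c0 gamma + c1 gamma' + c2 gamma'' whose coordinates are read off by Cramer's rule,
   and d/dx acts on coordinates by a first-order operator coming from
   gamma''' = (k1' + k2) gamma + k1 gamma'.  Now
   k2 = 2 det(gamma''', gamma', gamma'') - det(gamma, gamma'''', gamma'') involves x-derivatives of
   gamma only; commuting d/dt past d/dx and inserting the flow writes (k2)_t as a sum of
   determinants of coordinate columns, i.e. of polynomials in the x-jets of k1 and k2, and the
   conservation law becomes a polynomial identity. *)

Lemma fun2_ext (f g : R -> R -> R) : (forall y s, f y s = g y s) -> f = g.
Proof. intros E; do 2 (apply functional_extensionality; intro); apply E. Qed.

Definition ex_pdx (f : R -> R -> R) : Prop := forall y s, ex_derive (fun z => f z s) y.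

Lemma pdx_plus f g : ex_pdx f -> ex_pdx g ->
  pdx (fun y s => f y s + g y s) = fun y s => pdx f y s + pdx g y s.
Proof.
intros Hf Hg; apply fun2_ext; intros y s.
now apply (Derive_plus (fun z => f z s) (fun z => g z s)).
Qed.

Lemma pdx_minus f g : ex_pdx f -> ex_pdx g ->
  pdx (fun y s => f y s - g y s) = fun y s => pdx f y s - pdx g y s.
Proof.
intros Hf Hg; apply fun2_ext; intros y s.
now apply (Derive_minus (fun z => f z s) (fun z => g z s)).
Qed.

Lemma pdx_opp f : pdx (fun y s => - f y s) = fun y s => - pdx f y s.
Proof. apply fun2_ext; intros y s; apply (Derive_opp (fun z => f z s)). Qed.

Lemma pdx_mult f g : ex_pdx f -> ex_pdx g ->
  pdx (fun y s => f y s * g y s) = fun y s => pdx f y s * g y s + f y s * pdx g y s.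
Proof.
intros Hf Hg; apply fun2_ext; intros y s.
now apply (Derive_mult (fun z => f z s) (fun z => g z s)).
Qed.

Lemma pdx_pow f n : ex_pdx f ->
  pdx (fun y s => f y s ^ n) = fun y s => INR n * pdx f y s * f y s ^ pred n.
Proof.
intros Hf; apply fun2_ext; intros y s.
now apply (Derive_pow (fun z => f z s)).
Qed.

Lemma pdx_const c : pdx (fun _ _ => c) = fun _ _ => 0.
Proof. apply fun2_ext; intros y s; apply (Derive_const c). Qed.

Fixpoint ex_pdx_upto (n : nat) (f : R -> R -> R) : Prop :=
  match n with
  | O => True
  | S n => ex_pdx f /\ ex_pdx_upto n (pdx f)
  end.

Definition smooth_x (f : R -> R -> R) : Prop := forall n, ex_pdx_upto n f.

Lemma smooth_x_ex_pdx f : smooth_x f -> ex_pdx f.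
Proof. intros H; exact (proj1 (H 1%nat)). Qed.

Lemma smooth_x_pdx f : smooth_x f -> smooth_x (pdx f).
Proof. intros H n; exact (proj2 (H (S n))). Qed.

Lemma smooth_x_const c : smooth_x (fun _ _ => c).
Proof.
intros n; revert c; induction n as [|n IH]; intros c; [exact I|].
split; [intros y s; apply ex_derive_const|rewrite pdx_const; apply IH].
Qed.

Lemma ex_pdx_upto_plus n : forall f g, ex_pdx_upto n f -> ex_pdx_upto n g ->
  ex_pdx_upto n (fun y s => f y s + g y s).
Proof.
induction n as [|n IH]; intros f g Hf Hg; [exact I|].
destruct Hf as [Df Hf], Hg as [Dg Hg]; split.
- intros y s; now apply (ex_derive_plus (fun z => f z s) (fun z => g z s)).
- rewrite pdx_plus by assumption; now apply IH.
Qed.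

Lemma ex_pdx_upto_opp n : forall f, ex_pdx_upto n f -> ex_pdx_upto n (fun y s => - f y s).
Proof.
induction n as [|n IH]; intros f Hf; [exact I|].
destruct Hf as [Df Hf]; split.
- intros y s; now apply (ex_derive_opp (fun z => f z s)).
- rewrite pdx_opp; now apply IH.
Qed.

Lemma smooth_x_plus f g : smooth_x f -> smooth_x g -> smooth_x (fun y s => f y s + g y s).
Proof. intros Hf Hg n; now apply ex_pdx_upto_plus. Qed.

Lemma smooth_x_opp f : smooth_x f -> smooth_x (fun y s => - f y s).
Proof. intros Hf n; now apply ex_pdx_upto_opp. Qed.

Lemma smooth_x_minus f g : smooth_x f -> smooth_x g -> smooth_x (fun y s => f y s - g y s).
Proof. intros Hf Hg; exact (smooth_x_plus _ _ Hf (smooth_x_opp _ Hg)). Qed.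

Lemma smooth_x_mult f g : smooth_x f -> smooth_x g -> smooth_x (fun y s => f y s * g y s).
Proof.
intros Hf Hg n; revert f g Hf Hg; induction n as [|n IH]; intros f g Hf Hg; [exact I|].
split.
- intros y s; apply (ex_derive_mult (fun z => f z s) (fun z => g z s));
    now apply smooth_x_ex_pdx.
- rewrite pdx_mult by now apply smooth_x_ex_pdx.
  apply ex_pdx_upto_plus; apply IH; auto using smooth_x_pdx.
Qed.

Lemma smooth_x_pow f n : smooth_x f -> smooth_x (fun y s => f y s ^ n).
Proof.
intros Hf; induction n as [|n IH]; [exact (smooth_x_const 1)|].
exact (smooth_x_mult _ _ Hf IH).
Qed.

Ltac smooth_x_auto :=
  repeat first
    [ assumption
    | apply smooth_x_pdx | apply smooth_x_plus | apply smooth_x_minus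
    | apply smooth_x_mult | apply smooth_x_opp | apply smooth_x_pow
    | apply smooth_x_const ].

Ltac ex_pdx_auto := apply smooth_x_ex_pdx; smooth_x_auto.

Ltac expand_pdx :=
  repeat (first
    [ rewrite pdx_plus by ex_pdx_auto | rewrite pdx_minus by ex_pdx_auto
    | rewrite pdx_mult by ex_pdx_auto | rewrite pdx_pow by ex_pdx_auto
    | rewrite pdx_opp | rewrite pdx_const ]; cbv beta).

Lemma applyD_app l1 l2 f : applyD (l1 ++ l2) f = applyD l1 (applyD l2 f).
Proof. apply fold_right_app. Qed.

Lemma smooth2_pdx f : smooth2 f -> smooth2 (pdx f).
Proof. intros H l x t; specialize (H (l ++ true :: nil) x t); now rewrite applyD_app in H. Qed.

Lemma smooth2_pdt f : smooth2 f -> smooth2 (pdt f).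
Proof. intros H l x t; specialize (H (l ++ false :: nil) x t); now rewrite applyD_app in H. Qed.

Lemma smooth2_iter_pdx f n : smooth2 f -> smooth2 (Nat.iter n pdx f).
Proof. intros H; induction n as [|n IH]; [exact H|exact (smooth2_pdx _ IH)]. Qed.

Lemma smooth2_ex_derive_t f x t : smooth2 f -> ex_derive (fun s => f x s) t.
Proof. intros H; exact (proj1 (proj2 (H nil x t))). Qed.

Lemma smooth2_smooth_x f : smooth2 f -> smooth_x f.
Proof.
intros H n; revert f H; induction n as [|n IH]; intros f H; [exact I|].
split; [intros y s; exact (proj1 (H nil y s))|exact (IH _ (smooth2_pdx _ H))].
Qed.

Lemma pdt_pdx f : smooth2 f -> pdt (pdx f) = pdx (pdt f).
Proof.
intros H; apply fun2_ext; intros x t; symmetry; apply Schwarz.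
- exists (mkposreal 1 Rlt_0_1); intros u v _ _; repeat split.
  + exact (proj1 (H nil u v)).
  + exact (smooth2_ex_derive_t _ u v H).
  + exact (proj1 (smooth2_pdt _ H nil u v)).
  + exact (smooth2_ex_derive_t _ u v (smooth2_pdx _ H)).
- apply continuity_2d_pt_filterlim.
  exact (proj2 (proj2 (smooth2_pdx _ (smooth2_pdt _ H) nil x t))).
- apply continuity_2d_pt_filterlim.
  exact (proj2 (proj2 (smooth2_pdt _ (smooth2_pdx _ H) nil x t))).
Qed.

Lemma pdt_iter_pdx f n : smooth2 f -> pdt (Nat.iter n pdx f) = Nat.iter n pdx (pdt f).
Proof.
intros H; induction n as [|n IH]; [reflexivity|].
simpl; rewrite pdt_pdx by now apply smooth2_iter_pdx.
now rewrite IH.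
Qed.

Record coords := Coords { co0 : R -> R -> R; co1 : R -> R -> R; co2 : R -> R -> R }.

(* One Cartesian component of [co0 c * gamma + co1 c * gamma' + co2 c * gamma'']; the same
   coordinates serve all three components [g] of [gamma]. *)
Definition in_frame (c : coords) (g : R -> R -> R) : R -> R -> R :=
  fun y s => co0 c y s * g y s + co1 c y s * pdx g y s + co2 c y s * pdx (pdx g) y s.

(* Coordinates of the x-derivative, by [gamma''' = (k1' + k2) gamma + k1 gamma']. *)
Definition frame_pdx (k1 k2 : R -> R -> R) (c : coords) : coords :=
  Coords (fun y s => pdx (co0 c) y s + (pdx k1 y s + k2 y s) * co2 c y s)
         (fun y s => co0 c y s + pdx (co1 c) y s + k1 y s * co2 c y s)
         (fun y s => co1 c y s + pdx (co2 c) y s).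

Definition structure_eq (k1 k2 g : R -> R -> R) : Prop :=
  pdx (pdx (pdx g)) = fun y s => k1 y s * pdx g y s + (pdx k1 y s + k2 y s) * g y s.

Definition coords_smooth_x (c : coords) : Prop :=
  smooth_x (co0 c) /\ smooth_x (co1 c) /\ smooth_x (co2 c).

Section Frame.
Variables k1 k2 g : R -> R -> R.
Hypotheses (Xk1 : smooth_x k1) (Xk2 : smooth_x k2) (Xg : smooth_x g).
Hypothesis structure : structure_eq k1 k2 g.

Lemma coords_smooth_x_frame_pdx c : coords_smooth_x c -> coords_smooth_x (frame_pdx k1 k2 c).
Proof using Xk1 Xk2. intros (X0 & X1 & X2); repeat split; simpl; smooth_x_auto. Qed.

Lemma pdx_in_frame c : coords_smooth_x c -> pdx (in_frame c g) = in_frame (frame_pdx k1 k2 c) g.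
Proof using All.
intros (X0 & X1 & X2); unfold in_frame; expand_pdx; rewrite structure.
apply fun2_ext; intros y s; simpl; ring.
Qed.

Lemma iter_pdx_in_frame n c : coords_smooth_x c ->
  Nat.iter n pdx (in_frame c g) = in_frame (Nat.iter n (frame_pdx k1 k2) c) g.
Proof using All.
intros Xc; induction n as [|n IH]; [reflexivity|].
assert (Xn : coords_smooth_x (Nat.iter n (frame_pdx k1 k2) c)).
{ clear IH; induction n as [|n IHn]; [exact Xc|exact (coords_smooth_x_frame_pdx _ IHn)]. }
simpl; rewrite IH; exact (pdx_in_frame _ Xn).
Qed.
End Frame.

Definition frame_id : coords := Coords (fun _ _ => 1) (fun _ _ => 0) (fun _ _ => 0).

Definition flow_coords (k1 k2 : R -> R -> R) : coords :=
  Coords (fun y s => - (pdx k2 y s + / 3 * (pdx (pdx k1) y s + 2 * k1 y s ^ 2))) k2 k1.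

(* Coordinates of the n-th x-derivative of [gamma] and of its t-derivative. *)
Definition pdx_coords k1 k2 n : coords := Nat.iter n (frame_pdx k1 k2) frame_id.
Definition pdt_pdx_coords k1 k2 n : coords := Nat.iter n (frame_pdx k1 k2) (flow_coords k1 k2).

Lemma in_frame_id g : in_frame frame_id g = g.
Proof. apply fun2_ext; intros y s; unfold in_frame; simpl; ring. Qed.

Lemma coords_smooth_x_frame_id : coords_smooth_x frame_id.
Proof. repeat split; simpl; apply smooth_x_const. Qed.

Lemma coords_smooth_x_flow k1 k2 :
  smooth_x k1 -> smooth_x k2 -> coords_smooth_x (flow_coords k1 k2).
Proof. intros; repeat split; simpl; smooth_x_auto. Qed.

Section Component.
Variables k1 k2 g : R -> R -> R.
Hypotheses (Xk1 : smooth_x k1) (Xk2 : smooth_x k2) (Sg : smooth2 g).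
Hypothesis structure : structure_eq k1 k2 g.
Hypothesis flow : pdt g = in_frame (flow_coords k1 k2) g.

Lemma iter_pdx_frame n : Nat.iter n pdx g = in_frame (pdx_coords k1 k2 n) g.
Proof using Xk1 Xk2 Sg structure.
transitivity (Nat.iter n pdx (in_frame frame_id g)); [now rewrite in_frame_id|].
apply iter_pdx_in_frame; auto using smooth2_smooth_x, coords_smooth_x_frame_id.
Qed.

Lemma Derive_iter_pdx_frame n x t :
  Derive (fun s => Nat.iter n pdx g x s) t = in_frame (pdt_pdx_coords k1 k2 n) g x t.
Proof using All.
change (pdt (Nat.iter n pdx g) x t = in_frame (pdt_pdx_coords k1 k2 n) g x t).
rewrite pdt_iter_pdx, flow by exact Sg.
rewrite (iter_pdx_in_frame k1 k2 g); auto using smooth2_smooth_x, coords_smooth_x_flow.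
Qed.
End Component.

Lemma ex_derive_det3 (a1 a2 a3 b1 b2 b3 c1 c2 c3 : R -> R) t :
  ex_derive a1 t -> ex_derive a2 t -> ex_derive a3 t ->
  ex_derive b1 t -> ex_derive b2 t -> ex_derive b3 t ->
  ex_derive c1 t -> ex_derive c2 t -> ex_derive c3 t ->
  ex_derive (fun s => det3 (a1 s) (a2 s) (a3 s) (b1 s) (b2 s) (b3 s) (c1 s) (c2 s) (c3 s)) t.
Proof. intros; unfold det3; auto_derive; repeat split; assumption. Qed.

Lemma Derive_det3 (a1 a2 a3 b1 b2 b3 c1 c2 c3 : R -> R) t :
  ex_derive a1 t -> ex_derive a2 t -> ex_derive a3 t ->
  ex_derive b1 t -> ex_derive b2 t -> ex_derive b3 t ->
  ex_derive c1 t -> ex_derive c2 t -> ex_derive c3 t ->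
  Derive (fun s => det3 (a1 s) (a2 s) (a3 s) (b1 s) (b2 s) (b3 s) (c1 s) (c2 s) (c3 s)) t
  = det3 (Derive a1 t) (Derive a2 t) (Derive a3 t) (b1 t) (b2 t) (b3 t) (c1 t) (c2 t) (c3 t)
  + det3 (a1 t) (a2 t) (a3 t) (Derive b1 t) (Derive b2 t) (Derive b3 t) (c1 t) (c2 t) (c3 t)
  + det3 (a1 t) (a2 t) (a3 t) (b1 t) (b2 t) (b3 t) (Derive c1 t) (Derive c2 t) (Derive c3 t).
Proof.
intros; apply is_derive_unique; unfold det3.
auto_derive; [repeat split; assumption|].
(* [auto_derive] leaves the atoms eta-expanded *)
repeat match goal with |- context [Derive (fun x => ?f x) t] =>
  change (Derive (fun x => f x) t) with (Derive f t) end.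
ring.
Qed.

Definition coords_det (p q r : coords) (x t : R) : R :=
  det3 (co0 p x t) (co1 p x t) (co2 p x t) (co0 q x t) (co1 q x t) (co2 q x t)
       (co0 r x t) (co1 r x t) (co2 r x t).

Lemma det3_in_frame p q r g1 g2 g3 x t :
  det3 (in_frame p g1 x t) (in_frame p g2 x t) (in_frame p g3 x t)
       (in_frame q g1 x t) (in_frame q g2 x t) (in_frame q g3 x t)
       (in_frame r g1 x t) (in_frame r g2 x t) (in_frame r g3 x t)
  = coords_det p q r x t
    * det3 (g1 x t) (g2 x t) (g3 x t) (pdx g1 x t) (pdx g2 x t) (pdx g3 x t)
           (pdx (pdx g1) x t) (pdx (pdx g2) x t) (pdx (pdx g3) x t).
Proof. unfold in_frame, coords_det, det3; ring. Qed.

Definition det_derivs (g1 g2 g3 : R -> R -> R) (i j k : nat) (x t : R) : R :=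
  det3 (Nat.iter i pdx g1 x t) (Nat.iter i pdx g2 x t) (Nat.iter i pdx g3 x t)
       (Nat.iter j pdx g1 x t) (Nat.iter j pdx g2 x t) (Nat.iter j pdx g3 x t)
       (Nat.iter k pdx g1 x t) (Nat.iter k pdx g2 x t) (Nat.iter k pdx g3 x t).

Definition k2_flux (k1 k2 : R -> R -> R) : R -> R -> R :=
  fun y s =>
    2 / 3 * pdx (pdx (pdx (pdx k1))) y s
    + pdx (pdx (pdx k2)) y s
    - 2 * k1 y s * pdx (pdx k1) y s
    - (pdx k1 y s) ^ 2
    - 2 * k1 y s * pdx k2 y s
    + 4 / 9 * k1 y s ^ 3
    + 2 * k2 y s ^ 2.

Lemma smooth_x_det3 (f1 f2 f3 f4 f5 f6 f7 f8 f9 : R -> R -> R) :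
  smooth_x f1 -> smooth_x f2 -> smooth_x f3 -> smooth_x f4 -> smooth_x f5 ->
  smooth_x f6 -> smooth_x f7 -> smooth_x f8 -> smooth_x f9 ->
  smooth_x (fun y s => det3 (f1 y s) (f2 y s) (f3 y s) (f4 y s) (f5 y s) (f6 y s)
                            (f7 y s) (f8 y s) (f9 y s)).
Proof. intros; unfold det3; smooth_x_auto. Qed.

Section Curve.
Variables g1 g2 g3 k1 k2 : R -> R -> R.
Hypotheses (Sg1 : smooth2 g1) (Sg2 : smooth2 g2) (Sg3 : smooth2 g3).
Hypothesis unimodular : forall x t,
  det3 (g1 x t) (g2 x t) (g3 x t) (pdx g1 x t) (pdx g2 x t) (pdx g3 x t)
       (pdx (pdx g1) x t) (pdx (pdx g2) x t) (pdx (pdx g3) x t) = 1.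
Hypothesis flow1 : pdt g1 = in_frame (flow_coords k1 k2) g1.
Hypothesis flow2 : pdt g2 = in_frame (flow_coords k1 k2) g2.
Hypothesis flow3 : pdt g3 = in_frame (flow_coords k1 k2) g3.

(* Cramer's rule: [k1] and [k2] are the coordinates of [gamma_t] on [gamma''] and [gamma']. *)
Lemma k1_smooth_x : smooth_x k1.
Proof using Sg1 Sg2 Sg3 unimodular flow1 flow2 flow3.
replace k1 with (fun y s => det3 (g1 y s) (g2 y s) (g3 y s) (pdx g1 y s) (pdx g2 y s) (pdx g3 y s)
                                 (pdt g1 y s) (pdt g2 y s) (pdt g3 y s)).
- apply smooth_x_det3;
    auto using smooth2_smooth_x, smooth2_pdx, smooth2_pdt.
- apply fun2_ext; intros y s.
  rewrite <- (Rmult_1_r (k1 y s)), <- (unimodular y s), flow1, flow2, flow3.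
  unfold in_frame, det3; simpl; ring.
Qed.

Lemma k2_smooth_x : smooth_x k2.
Proof using Sg1 Sg2 Sg3 unimodular flow1 flow2 flow3.
replace k2 with (fun y s => det3 (g1 y s) (g2 y s) (g3 y s) (pdt g1 y s) (pdt g2 y s) (pdt g3 y s)
                                 (pdx (pdx g1) y s) (pdx (pdx g2) y s) (pdx (pdx g3) y s)).
- apply smooth_x_det3;
    auto using smooth2_smooth_x, smooth2_pdx, smooth2_pdt.
- apply fun2_ext; intros y s.
  rewrite <- (Rmult_1_r (k2 y s)), <- (unimodular y s), flow1, flow2, flow3.
  unfold in_frame, det3; simpl; ring.
Qed.

Hypothesis structure1 : structure_eq k1 k2 g1.
Hypothesis structure2 : structure_eq k1 k2 g2.
Hypothesis structure3 : structure_eq k1 k2 g3.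

Lemma det_derivs_coords i j k x t :
  det_derivs g1 g2 g3 i j k x t
  = coords_det (pdx_coords k1 k2 i) (pdx_coords k1 k2 j) (pdx_coords k1 k2 k) x t.
Proof using All.
pose proof k1_smooth_x; pose proof k2_smooth_x.
unfold det_derivs.
rewrite !(iter_pdx_frame k1 k2 g1), !(iter_pdx_frame k1 k2 g2), !(iter_pdx_frame k1 k2 g3)
  by assumption.
rewrite det3_in_frame; rewrite (unimodular x t); ring.
Qed.

Lemma Derive_det_derivs i j k x t :
  Derive (fun s => det_derivs g1 g2 g3 i j k x s) t
  = coords_det (pdt_pdx_coords k1 k2 i) (pdx_coords k1 k2 j) (pdx_coords k1 k2 k) x t
  + coords_det (pdx_coords k1 k2 i) (pdt_pdx_coords k1 k2 j) (pdx_coords k1 k2 k) x t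
  + coords_det (pdx_coords k1 k2 i) (pdx_coords k1 k2 j) (pdt_pdx_coords k1 k2 k) x t.
Proof using All.
pose proof k1_smooth_x; pose proof k2_smooth_x.
unfold det_derivs; rewrite Derive_det3 by (apply smooth2_ex_derive_t, smooth2_iter_pdx; assumption).
rewrite !(Derive_iter_pdx_frame k1 k2 g1), !(Derive_iter_pdx_frame k1 k2 g2),
  !(Derive_iter_pdx_frame k1 k2 g3) by assumption.
rewrite !(iter_pdx_frame k1 k2 g1), !(iter_pdx_frame k1 k2 g2), !(iter_pdx_frame k1 k2 g3)
  by assumption.
rewrite !det3_in_frame, unimodular; ring.
Qed.

Ltac eval_coords :=
  unfold coords_det, pdx_coords, pdt_pdx_coords;
  cbn [Nat.iter nat_rect frame_pdx flow_coords frame_id co0 co1 co2];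
  expand_pdx; unfold det3.

(* Only x-derivatives of [gamma] occur, so d/dt can be moved onto [gamma] by Schwarz. *)
Lemma k2_det_derivs x t :
  k2 x t = 2 * det_derivs g1 g2 g3 3 1 2 x t - det_derivs g1 g2 g3 0 4 2 x t.
Proof using All.
pose proof k1_smooth_x; pose proof k2_smooth_x.
rewrite !det_derivs_coords; eval_coords; ring.
Qed.

Lemma ex_derive_det_derivs i j k x t : ex_derive (fun s => det_derivs g1 g2 g3 i j k x s) t.
Proof using Sg1 Sg2 Sg3.
unfold det_derivs; apply ex_derive_det3;
  apply smooth2_ex_derive_t, smooth2_iter_pdx; assumption.
Qed.

Lemma pdt_k2 x t : pdt k2 x t = pdx (k2_flux k1 k2) x t.
Proof using All.
pose proof k1_smooth_x; pose proof k2_smooth_x.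
unfold pdt.
rewrite (Derive_ext _ (fun s => 2 * det_derivs g1 g2 g3 3 1 2 x s - det_derivs g1 g2 g3 0 4 2 x s))
  by (intro; apply k2_det_derivs).
rewrite Derive_minus, Derive_scal, !Derive_det_derivs
  by auto using ex_derive_scal, ex_derive_det_derivs.
unfold k2_flux; eval_coords; cbn [INR pred]; field.
Qed.

End Curve.

Theorem mainTheorem5 (g1 g2 g3 k1 k2 : R -> R -> R) :
  smooth2 g1 -> smooth2 g2 -> smooth2 g3 ->
  (forall x t,
     det3 (g1 x t) (g2 x t) (g3 x t)
          (pdx g1 x t) (pdx g2 x t) (pdx g3 x t)
          (pdx (pdx g1) x t) (pdx (pdx g2) x t) (pdx (pdx g3) x t) = 1) ->
  (forall g, (g = g1 \/ g = g2 \/ g = g3) ->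
     forall x t,
       pdx (pdx (pdx g)) x t
       = pdx (fun y s => k1 y s * g y s) x t + k2 x t * g x t) ->
  (forall g, (g = g1 \/ g = g2 \/ g = g3) ->
     forall x t,
       pdt g x t
       = k1 x t * pdx (pdx g) x t + k2 x t * pdx g x t
         - (pdx k2 x t + / 3 * (pdx (pdx k1) x t + 2 * k1 x t ^ 2)) * g x t) ->
  forall x t,
    pdt k2 x t
    = pdx (fun y s =>
            2 / 3 * pdx (pdx (pdx (pdx k1))) y s
            + pdx (pdx (pdx k2)) y s
            - 2 * k1 y s * pdx (pdx k1) y s
            - (pdx k1 y s) ^ 2
            - 2 * k1 y s * pdx k2 y s
            + 4 / 9 * k1 y s ^ 3
            + 2 * k2 y s ^ 2) x t.
Proof.
intros Sg1 Sg2 Sg3 unimodular structure flow x t.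
assert (flow_frame : forall g, g = g1 \/ g = g2 \/ g = g3 ->
          pdt g = in_frame (flow_coords k1 k2) g).
{ intros g Hg; apply fun2_ext; intros y s.
  rewrite (flow g Hg); unfold in_frame; simpl; ring. }
pose proof (flow_frame g1 (or_introl eq_refl)) as F1.
pose proof (flow_frame g2 (or_intror (or_introl eq_refl))) as F2.
pose proof (flow_frame g3 (or_intror (or_intror eq_refl))) as F3.
pose proof (k1_smooth_x g1 g2 g3 k1 k2 Sg1 Sg2 Sg3 unimodular F1 F2 F3) as Xk1.
assert (structure_eqs : forall g, g = g1 \/ g = g2 \/ g = g3 -> smooth2 g ->
          structure_eq k1 k2 g).
{ intros g Hg Sg; apply fun2_ext; intros y s.
  rewrite (structure g Hg), pdx_mult
    by (apply smooth_x_ex_pdx; auto using smooth2_smooth_x); ring. }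
exact (pdt_k2 g1 g2 g3 k1 k2 Sg1 Sg2 Sg3 unimodular F1 F2 F3
         (structure_eqs g1 (or_introl eq_refl) Sg1)
         (structure_eqs g2 (or_intror (or_introl eq_refl)) Sg2)
         (structure_eqs g3 (or_intror (or_intror eq_refl)) Sg3) x t).
Qed.
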